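(* The factor complexities $\mathsf{p}_{\mathbf{t}_{3/2}}$ and $\mathsf{p}_{\Delta(\mathbf{t}_{3/2})}$ are both in $\Theta(n^r)$ with $r=\frac{\log 3}{\log(3/2)}$; that is, for each of these two functions $\mathsf{p}$ there exist constants $C_1,C_2>0$ with $C_1n^r\le\mathsf{p}(n)\le C_2n^r$ for all $n\ge1$.
   Context: The Thue--Morse word in base $3/2$ is the unique binary sequence $\mathbf{t}_{3/2}=(t_n)_{n\ge0}$ with $t_0=0$, $t_{3n}=t_{3n+1}=t_{2n}$ and $t_{3n+2}=1-t_{2n+1}$ for all $n\ge0$ (equivalently, $t_n$ is the digit sum modulo $2$ of the base-$3/2$ expansion of $n$, where $\langle 0\rangle$ is empty and $\langle n\rangle=\langle m\rangle d$ for $2n=3m+d$, $d\in\{0,1,2\}$). For a binary sequence $\mathbf{x}=(x_n)$, $\Delta(\mathbf{x})=(x_{n+1}-x_n\bmod 2)_{n\ge0}$, and $\mathsf{p}_{\mathbf{x}}(n)$ is the number of distinct length-$n$ factors of $\mathbf{x}$. *)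

From mathcomp Require Import all_boot.
From mathcomp Require Import boolp.
From Stdlib Require Import Reals.

Set Implicit Arguments.
Unset Strict Implicit.
Unset Printing Implicit Defensive.

(* Digit sum of the base-3/2 expansion: <0> is empty, <n> = <m> d where
   2n = 3m + d, d in {0,1,2}.  Since m < n for n >= 1, fuel n suffices. *)
Fixpoint dsum32_fuel (fuel n : nat) : nat :=
  match fuel with
  | 0 => 0
  | S f => if n == 0 then 0 else (n.*2 %% 3) + dsum32_fuel f (n.*2 %/ 3)
  end.

Definition dsum32 (n : nat) : nat := dsum32_fuel n n.

Definition thue_morse32 (n : nat) : bool := odd (dsum32 n).

Definition diff_seq (x : nat -> bool) (n : nat) : bool := x n.+1 (+) x n.

Definition is_factor (x : nat -> bool) (n : nat) (w : n.-tuple bool) : Prop :=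
  exists i : nat, forall j : 'I_n, tnth w j = x (i + j).

Definition factor_complexity (x : nat -> bool) (n : nat) : nat :=
  #|[set w : n.-tuple bool | `[< is_factor x w >] ]|.

Definition Theta_pow (p : nat -> nat) (r : R) : Prop :=
  exists C1 C2 : R, (0 < C1)%R /\ (0 < C2)%R /\
    forall n : nat, (1 <= n)%N ->
      (C1 * Rpower (INR n) r <= INR (p n))%R /\
      (INR (p n) <= C2 * Rpower (INR n) r)%R.

From Stdlib Require Import Reals Lra.
From mathcomp Require Import all_boot boolp zify.

Set Implicit Arguments.
Unset Strict Implicit.
Unset Printing Implicit Defensive.

(* Write i = 3m + j with j < 3.  The recurrence t(3m + j) = t(2m + [j = 2]) + [j = 2]
   makes the factor of length n at i a function of j and of the factor of
   length about 2n/3 at 2m, so p(n) <= 3 p(2n/3 + O(1)), whence p(n) = O(3^k)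
   as soon as (3/2)^k >= n.  Conversely, a factor of length 10 determines the
   residue mod 3 of its position (a finite check on the length-10 windows, which
   are closed under the recurrence); peeling off one base-3/2 digit at a time,
   a factor of length about 10 (3/2)^k determines its position mod 3^k, so
   p(n) >= 3^k for such n.  As (3/2)^r = 3, both bounds are of order n^r.  The
   difference sequence inherits them from p_Dx(n) <= p_x(n + 1) and
   p_x(n) <= 2 p_Dx(n), a factor of x being determined by its first letter and
   the corresponding factor of Dx. *)

Section Factors.

Variable x : nat -> bool.

Definition factor n i : n.-tuple bool := [tuple x (i + val p) | p < n].

Definition factors n := [set w : n.-tuple bool | `[< is_factor x w >] ].

Lemma factor_complexityE n : factor_complexity x n = #|factors n|.
Proof. by []. Qed.

Lemma factorsP n w : reflect (exists i, w = factor n i) (w \in factors n).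
Proof.
rewrite inE; apply: (iffP (asboolP _)) => [[i hi] | [i ->]].
  by exists i; apply: eq_from_tnth => p; rewrite hi tnth_mktuple.
by exists i => p; rewrite tnth_mktuple.
Qed.

Lemma factor_in_factors n i : factor n i \in factors n.
Proof. by apply/factorsP; exists i. Qed.

Lemma nth_factor n i k b : k < n -> nth b (factor n i) k = x (i + k).
Proof.
by move=> hk; apply: (nth_mktuple _ _ (Ordinal hk)).
Qed.

Lemma factor_complexity_le_exp2 n : factor_complexity x n <= 2 ^ n.
Proof. by rewrite -card_bool -card_tuple max_card. Qed.

Lemma factor_complexity_ge K n :
  {in gtn K &, injective (factor n)} -> K <= factor_complexity x n.
Proof.
move=> inj; rewrite factor_complexityE.
have inj_ord : injective (fun i : 'I_K => factor n i).
  by move=> i i' /inj eq_ii'; apply: val_inj; apply: eq_ii'; rewrite inE.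
rewrite -{1}(card_ord K) -cardsT -(card_imset _ inj_ord).
by apply/subset_leq_card/subsetP => _ /imsetP[i _ ->]; apply: factor_in_factors.
Qed.

Lemma factor_complexity_gt0 n : 0 < factor_complexity x n.
Proof. by apply: factor_complexity_ge => i i'; rewrite !inE; lia. Qed.

End Factors.

Lemma factor_complexity_le_image (x y : nat -> bool) n m (A : finType)
    (g : A -> m.-tuple bool -> n.-tuple bool) :
  (forall i, exists a j, factor x n i = g a (factor y m j)) ->
  factor_complexity x n <= #|A| * factor_complexity y m.
Proof.
move=> img; rewrite !factor_complexityE -cardsT -cardsX.
apply: leq_trans (leq_imset_card (fun u => g u.1 u.2) _).
apply/subset_leq_card/subsetP => _ /factorsP[i ->].
have [a [j ->]] := img i.
by apply/imsetP; exists (a, factor y m j); rewrite // in_setX in_setT factor_in_factors.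
Qed.

Lemma factor_complexity_diff_le x n :
  factor_complexity (diff_seq x) n <= factor_complexity x n.+1.
Proof.
have := @factor_complexity_le_image (diff_seq x) x n n.+1 _
  (fun (_ : unit) w => [tuple nth false w (val p).+1 (+) nth false w (val p) | p < n]).
rewrite card_unit mul1n; apply=> i; exists tt, i; apply: eq_from_tnth => p.
rewrite !tnth_mktuple !nth_factor ?addnS // ltnS.
  exact: ltnW (ltn_ord p).
exact: ltn_ord.
Qed.

Lemma foldl_addb_factor_diff x n i q : q <= n ->
  foldl addb (x i) (take q (factor (diff_seq x) n i)) = x (i + q).
Proof.
elim: q => [|q IHq] hq; first by rewrite take0 addn0.
rewrite (take_nth false) ?size_tuple // foldl_rcons IHq ?nth_factor //; last exact: ltnW.
by rewrite /diff_seq addnS addbC addbK.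
Qed.

Lemma factor_complexity_le_diff x n :
  factor_complexity x n <= 2 * factor_complexity (diff_seq x) n.
Proof.
have := @factor_complexity_le_image x (diff_seq x) n n _
  (fun (b : bool) w => [tuple foldl addb b (take (val p) w) | p < n]).
rewrite card_bool; apply=> i; exists (x i), i; apply: eq_from_tnth => p.
by rewrite !tnth_mktuple foldl_addb_factor_diff // (ltnW (ltn_ord p)).
Qed.

Local Notation t := thue_morse32.

Lemma dsum32_fuel_enough f1 f2 n :
  n <= f1 -> n <= f2 -> dsum32_fuel f1 n = dsum32_fuel f2 n.
Proof.
elim: f1 f2 n => [|f1 IH] [|f2] n //=; rewrite ?leqn0 => h1 h2.
- by rewrite h1.
- by rewrite h2.
- by case: eqP => // /eqP n_neq0; congr (_ + _); apply: IH; lia.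
Qed.

Lemma dsum32_digit n m d :
  0 < n -> n.*2 = 3 * m + d -> d < 3 -> dsum32 n = d + dsum32 m.
Proof.
case: n => // n _ eq_n2 lt_d3; rewrite /dsum32 /= -/(n.+1.*2).
have -> : n.+1.*2 %% 3 = d by lia.
have -> : n.+1.*2 %/ 3 = m by lia.
by congr (_ + _); apply: dsum32_fuel_enough; lia.
Qed.

Lemma thue_morse32_rec m j :
  j < 3 -> t (3 * m + j) = t (2 * m + (j == 2)) (+) (j == 2).
Proof.
rewrite /thue_morse32; case: j => [|[|[|]]] // _.
- case: m => // m.
  by rewrite (@dsum32_digit _ (2 * m.+1) 0) ?addn0 ?addbF //; lia.
- by rewrite (@dsum32_digit _ (2 * m) 2) ?addn0 ?addbF //; lia.
- by rewrite (@dsum32_digit _ (2 * m + 1) 1) ?oddD //; lia.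
Qed.

Lemma thue_morse32_3mD m x :
  t (3 * m + x) = t (2 * m + (2 * x) %/ 3) (+) (x %% 3 == 2).
Proof.
have lt_r3 : x %% 3 < 3 by rewrite ltn_pmod.
rewrite {1}(divn_eq x 3) (_ : _ + _ = 3 * (m + x %/ 3) + x %% 3); last by lia.
rewrite thue_morse32_rec //; congr (t _ (+) _).
by move: lt_r3 (divn_eq x 3); case: (x %% 3) => [|[|[|]]] //=; lia.
Qed.

Lemma thue_morse32_2mD m y :
  t (2 * m + y) = t (3 * m + (3 * (y %/ 2) + 2 * (y %% 2))) (+) odd y.
Proof.
rewrite thue_morse32_3mD (_ : (2 * _) %/ 3 = y); last by lia.
suff -> : (3 * (y %/ 2) + 2 * (y %% 2)) %% 3 == 2 = odd y by rewrite addbK.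
by have := modn2 y; case: (odd y) => h; apply/eqP; lia.
Qed.

Lemma thue_morse32_complexity_le_shrink n :
  factor_complexity t n <= 3 * factor_complexity t ((2 * n.+1) %/ 3).+1.
Proof.
have := @factor_complexity_le_image t t n ((2 * n.+1) %/ 3).+1 'I_3
  (fun a w => [tuple nth false w ((2 * (a + p)) %/ 3) (+) ((a + p) %% 3 == 2) | p < n]).
rewrite card_ord; apply=> i.
exists (Ordinal (ltn_pmod i (isT : 0 < 3))), (2 * (i %/ 3)).
apply: eq_from_tnth => p; have lt_pn := ltn_ord p.
rewrite !tnth_mktuple nth_factor /=; last by have := ltn_pmod i (isT : 0 < 3); lia.
by rewrite {1}(divn_eq i 3) mulnC -addnA thue_morse32_3mD.
Qed.

Lemma thue_morse32_complexity_le_pow3 k n :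
  2 ^ k * (n - 5) <= 3 ^ k -> factor_complexity t n <= 64 * 3 ^ k.
Proof.
elim: k n => [|k IHk] n.
  rewrite expn0 mul1n => le_n6; apply: leq_trans (factor_complexity_le_exp2 _ _) _.
  by apply: leq_trans (leq_pexp2l _ (_ : n <= 6)) _ => //; lia.
move=> le_n; apply: leq_trans (thue_morse32_complexity_le_shrink n) _.
rewrite expnS mulnCA leq_pmul2l //; apply: IHk.
have shrink_n : 3 * ((2 * n.+1) %/ 3).+1 - 15 <= 2 * (n - 5) by lia.
move: le_n; rewrite !expnS; nia.
Qed.

Lemma thue_morse32_complexity_upper n :
  0 < n -> exists k, factor_complexity t n <= 192 * 3 ^ k /\ 3 ^ k <= 2 ^ k * n.
Proof.
move=> n_gt0.
have ex_k : exists k, 2 ^ k * (n - 5) <= 3 ^ k.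
  exists (2 * n); apply: (@leq_trans (2 ^ (2 * n) * 2 ^ n)).
    by rewrite leq_mul2l (leq_trans (leq_subr 5 n)) ?orbT // ltnW // ltn_expl.
  by rewrite -expnD (_ : 2 * n + n = 3 * n) ?expnM ?leq_exp2r //; lia.
case: (ex_minnP ex_k) => -[le_0 _ | k le_k min_k].
  exists 0; rewrite expn0 mul1n; split=> //.
  by apply: leq_trans (thue_morse32_complexity_le_pow3 le_0) _.
exists k; split.
  by apply: leq_trans (thue_morse32_complexity_le_pow3 le_k) _; rewrite expnS mulnA.
have lt_k : 3 ^ k < 2 ^ k * (n - 5).
  by rewrite ltnNge; apply/negP => /min_k; rewrite ltnn.
by apply: ltnW (leq_trans lt_k _); rewrite leq_mul2l leq_subr orbT.
Qed.

Definition window i : seq bool := [seq t (i + k) | k <- iota 0 10].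

Definition expand_window (w : seq bool) j : seq bool :=
  [seq nth false w ((2 * (j + p)) %/ 3) (+) ((j + p) %% 3 == 2) | p <- iota 0 10].

Lemma window_3mD m j : j < 3 -> window (3 * m + j) = expand_window (window (2 * m)) j.
Proof.
move=> lt_j3; apply/eq_in_map => p; rewrite mem_iota add0n => /andP[_ lt_p10].
rewrite (nth_map 0) ?size_iota ?nth_iota ?add0n; try lia.
by rewrite -addnA thue_morse32_3mD.
Qed.

Definition expand_windows (T : seq (nat * seq bool)) :=
  undup (T ++ [seq (j, expand_window e.2 j) | e <- T, j <- iota 0 3]).

(* Seven rounds of expansion from [(0, window 0)] reach a list closed under
   expansion, which by [window_3mD] contains every [(i %% 3, window i)]. *)
Definition phased_windows := iter 7 expand_windows [:: (0, window 0)].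

Definition closed_under_expansion (T : seq (nat * seq bool)) :=
  all (fun e => all (fun j => (j, expand_window e.2 j) \in T) (iota 0 3)) T.

Definition phase_determined (T : seq (nat * seq bool)) :=
  all (fun e1 => all (fun e2 => (e1.2 == e2.2) ==> (e1.1 == e2.1)) T) T.

Lemma phased_windows_closed : closed_under_expansion phased_windows.
Proof. by vm_compute. Qed.

Lemma phased_windows_phase_determined : phase_determined phased_windows.
Proof. by vm_compute. Qed.

Lemma window_in_phased_windows i : (i %% 3, window i) \in phased_windows.
Proof.
elim/ltn_ind: i => i IHi; have [-> | i_gt0] := posnP i; first by vm_compute.
have lt_r3 : i %% 3 < 3 by rewrite ltn_pmod.
have -> : window i = expand_window (window (2 * (i %/ 3))) (i %% 3).
  by rewrite -window_3mD // mulnC -divn_eq.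
have lt_2m : 2 * (i %/ 3) < i by lia.
have /allP := allP phased_windows_closed _ (IHi _ lt_2m).
by apply; rewrite mem_iota.
Qed.

Lemma window_phase i i' : window i = window i' -> i %% 3 = i' %% 3.
Proof.
move=> eq_w; have := window_in_phased_windows i'; rewrite -eq_w => in_i'.
have /allP/(_ _ in_i') := allP phased_windows_phase_determined _ (window_in_phased_windows i).
by rewrite eqxx => /eqP.
Qed.

(* A factor of length [sync_len k.+1] at [3m + j] determines the factor of
   length [sync_len k] at [2m + minn j 1]: see [thue_morse32_desubst]. *)
Fixpoint sync_len k := if k is k'.+1 then sync_len k' + sync_len k' %/ 2 + 2 else 10.

Lemma sync_len_ge10 k : 10 <= sync_len k.
Proof. by elim: k => //= k IHk; lia. Qed.

Lemma sync_len_gt k : k < sync_len k.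
Proof. by elim: k => //= k IHk; lia. Qed.

Lemma sync_len_le k : 2 ^ k * (sync_len k + 4) <= 14 * 3 ^ k.
Proof.
elim: k => [|k IHk] //=; rewrite !expnS.
have step : 2 * (sync_len k + sync_len k %/ 2 + 2 + 4) <= 3 * (sync_len k + 4) by lia.
nia.
Qed.

Lemma thue_morse32_desubst k m m' j : j < 3 ->
    (forall p, p < sync_len k.+1 -> t (3 * m + j + p) = t (3 * m' + j + p)) ->
  forall d, d < sync_len k -> t (2 * m + minn j 1 + d) = t (2 * m' + minn j 1 + d).
Proof.
move=> lt_j3 agree d lt_d; rewrite -(addnA (2 * m)) -(addnA (2 * m')) !thue_morse32_2mD.
set P := 3 * _ + 2 * _.
have le_jP : j <= P by rewrite /P; lia.
rewrite -(subnKC le_jP) !addnA agree //= /P; lia.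
Qed.

Lemma modn_double_inj q m m' : odd q -> 2 * m = 2 * m' %[mod q] -> m = m' %[mod q].
Proof.
move=> odd_q eq_2m.
(* [q.+1 %/ 2] is an inverse of 2 modulo [q]. *)
have inv2 y : y %% q = (q.+1 %/ 2 * (2 * y %% q)) %% q.
  rewrite modnMmr mulnA (_ : q.+1 %/ 2 * 2 = 1 + q); last by move: (modn2 q); rewrite odd_q; lia.
  by rewrite mulnDl mul1n addnC mulnC modnMDl.
by rewrite inv2 eq_2m -inv2.
Qed.

Lemma thue_morse32_sync k i i' :
  (forall p, p < sync_len k -> t (i + p) = t (i' + p)) -> i = i' %[mod 3 ^ k].
Proof.
elim: k i i' => [|k IHk] i i' agree; first by rewrite expn0 !modn1.
have eq_phase : i %% 3 = i' %% 3.
  apply: window_phase; apply/eq_in_map => p; rewrite mem_iota => /andP[_ lt_p10].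
  by apply: agree; have := sync_len_ge10 k.+1; lia.
have lt_r3 : i %% 3 < 3 by rewrite ltn_pmod.
have def_i : i = 3 * (i %/ 3) + i %% 3 by rewrite mulnC -divn_eq.
have def_i' : i' = 3 * (i' %/ 3) + i %% 3 by rewrite eq_phase mulnC -divn_eq.
have /IHk/eqP : forall d, d < sync_len k ->
    t (2 * (i %/ 3) + minn (i %% 3) 1 + d) = t (2 * (i' %/ 3) + minn (i %% 3) 1 + d).
  by apply: thue_morse32_desubst; rewrite // -def_i -def_i'.
rewrite eqn_modDr => /eqP /modn_double_inj; rewrite oddX orbT => /(_ isT) eq_q.
by rewrite def_i def_i' expnS; apply/eqP; rewrite eqn_modDr -!muln_modr eq_q.
Qed.

Lemma thue_morse32_complexity_ge_pow3 k n : sync_len k <= n -> 3 ^ k <= factor_complexity t n.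
Proof.
move=> le_kn; apply: factor_complexity_ge => i i'; rewrite !inE => lt_i lt_i' eq_f.
rewrite -(modn_small lt_i) -(modn_small lt_i'); apply: thue_morse32_sync => p lt_p.
have lt_pn : p < n by lia.
by have := congr1 (fun w => tnth w (Ordinal lt_pn)) eq_f; rewrite !tnth_mktuple.
Qed.

Lemma thue_morse32_complexity_lower n :
  exists k, 3 ^ k <= factor_complexity t n /\ 2 ^ k * n <= 21 * 3 ^ k.
Proof.
have ex_k : exists k, n < sync_len k.+1 by exists n; have := sync_len_gt n.+1; lia.
case: (ex_minnP ex_k) => k lt_n min_k; exists k; split.
  case: k lt_n min_k => [|k] _ min_k; first exact: factor_complexity_gt0.
  by apply: thue_morse32_complexity_ge_pow3; rewrite leqNgt; apply/negP => /min_k; rewrite ltnn.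
have := sync_len_le k.+1; rewrite !expnS; nia.
Qed.

(* Up to the factor [C], [p n] is about [3 ^ k] for a [k] with [(3/2) ^ k] about [n],
   so that [p n] is about [n ^ r]. *)
Definition pow3_scaled_bounds (p : nat -> nat) (C : nat) : Prop :=
  forall n, 0 < n ->
    (exists k, p n <= C * 3 ^ k /\ 3 ^ k <= 2 ^ k * (C * n)) /\
    (exists k, 3 ^ k <= C * p n /\ 2 ^ k * n <= 3 ^ k * C).

Lemma thue_morse32_pow3_scaled_bounds : pow3_scaled_bounds (factor_complexity t) 192.
Proof.
move=> n n_gt0; split.
  have [k [up_p up_k]] := thue_morse32_complexity_upper n_gt0.
  by exists k; split=> //; nia.
have [k [lo_p lo_k]] := thue_morse32_complexity_lower n.
by exists k; split; nia.
Qed.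

Lemma pow3_scaled_bounds_diff x C :
  pow3_scaled_bounds (factor_complexity x) C ->
  pow3_scaled_bounds (factor_complexity (diff_seq x)) (2 * C).
Proof.
move=> bounds n n_gt0; have [[k [up_p up_k]] _] := bounds n.+1 isT.
have [_ [k' [lo_p lo_k]]] := bounds n n_gt0.
have := factor_complexity_diff_le x n; have := factor_complexity_le_diff x n.
by split; [exists k | exists k']; split; nia.
Qed.

Open Scope R_scope.

Local Notation r := (ln 3 / ln (3 / 2)).

Lemma INR_expn a k : INR (a ^ k)%N = INR a ^ k.
Proof. by elim: k => // k IHk; rewrite expnS mult_INR IHk. Qed.

Lemma le_INR_nat m n : (m <= n)%N -> INR m <= INR n.
Proof. by move/leP; apply: le_INR. Qed.

Lemma INR_pow3 k : INR (3 ^ k)%N = 2 ^ k * (3 / 2) ^ k.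
Proof. by rewrite INR_expn -Rpow_mult_distr; congr (_ ^ _); rewrite /=; lra. Qed.

Lemma pow32_le k b : (3 ^ k <= 2 ^ k * b)%N -> (3 / 2) ^ k <= INR b.
Proof.
move/le_INR_nat; rewrite mult_INR INR_pow3 INR_expn (_ : INR 2 = 2) //.
by apply: Rmult_le_reg_l; apply: pow_lt; lra.
Qed.

Lemma le_pow32_mul k a b : (2 ^ k * a <= 3 ^ k * b)%N -> INR a <= (3 / 2) ^ k * INR b.
Proof.
move/le_INR_nat; rewrite !mult_INR INR_pow3 INR_expn (_ : INR 2 = 2) // Rmult_assoc.
by apply: Rmult_le_reg_l; apply: pow_lt; lra.
Qed.

Lemma r_gt0 : 0 < r.
Proof.
have ln_gt0 y : 1 < y -> 0 < ln y by move=> y_gt1; rewrite -ln_1; apply: ln_increasing; lra.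
by apply: Rdiv_lt_0_compat; apply: ln_gt0; lra.
Qed.

Lemma Rpower_pow32 k : Rpower ((3 / 2) ^ k) r = 3 ^ k.
Proof.
have ln32_gt0 : 0 < ln (3 / 2) by rewrite -ln_1; apply: ln_increasing; lra.
have Rpower32 : Rpower (3 / 2) r = 3.
  rewrite /Rpower (_ : r * _ = ln 3); last by field; lra.
  by rewrite exp_ln //; lra.
rewrite -Rpower_pow; last lra.
by rewrite Rpower_mult Rmult_comm -Rpower_mult Rpower32 Rpower_pow //; lra.
Qed.

Lemma Rpower_r_le x y : 0 < x <= y -> Rpower x r <= Rpower y r.
Proof. by apply: Rle_Rpower_l; have := r_gt0; lra. Qed.

Lemma Theta_pow_of_pow3_scaled_bounds p C :
  (0 < C)%N -> pow3_scaled_bounds p C -> Theta_pow p r.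
Proof.
move=> C_gt0 bounds; set c := INR C; set cr := Rpower c r.
have c_gt0 : 0 < c by apply/lt_0_INR/ltP.
have cr_gt0 : 0 < cr by apply: exp_pos.
have pow32_gt0 k : 0 < (3 / 2) ^ k by apply: pow_lt; lra.
have INR3 : INR 3 = 3 by rewrite /=; lra.
have ccr_gt0 : 0 < c * cr by apply: Rmult_lt_0_compat.
exists (/ (c * cr)), (c * cr); split; first exact: Rinv_0_lt_compat.
split=> // n n_gt0; have n_pos : 0 < INR n by apply/lt_0_INR/ltP.
have [[k [up_p up_k]] [k' [lo_p lo_k]]] := bounds n n_gt0.
split.
- have := Rpower_r_le (conj n_pos (le_pow32_mul lo_k)).
  rewrite -Rpower_mult_distr ?Rpower_pow32 // -/c -/cr => le_nr.
  have := le_INR_nat lo_p; rewrite mult_INR INR_expn INR3 -/c => le_3p.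
  apply: (Rmult_le_reg_l (c * cr)) => //.
  by rewrite -Rmult_assoc Rinv_r ?Rmult_1_l; [nra | apply: Rgt_not_eq].
- have := pow32_le up_k; rewrite mult_INR -/c => le_kn.
  have := Rpower_r_le (conj (pow32_gt0 k) le_kn).
  rewrite -Rpower_mult_distr ?Rpower_pow32 // -/cr => le_3n.
  have := le_INR_nat up_p; rewrite mult_INR INR_expn INR3 -/c => le_p3.
  have nr_gt0 : 0 < Rpower (INR n) r by apply: exp_pos.
  nra.
Qed.

Theorem corollary16 :
  Theta_pow (factor_complexity thue_morse32) (ln 3 / ln (3 / 2))%R /\
  Theta_pow (factor_complexity (diff_seq thue_morse32)) (ln 3 / ln (3 / 2))%R.
Proof.
have tm_bounds := thue_morse32_pow3_scaled_bounds.
have diff_bounds := pow3_scaled_bounds_diff tm_bounds.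
by split; [apply: (Theta_pow_of_pow3_scaled_bounds _ tm_bounds)
          | apply: (Theta_pow_of_pow3_scaled_bounds _ diff_bounds)].
Qed.
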